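(* For every integer $n\ge1$ there exists an infinite word $w_n$ over an alphabet $\Sigma_n$ of $2n$ letters with $\mathrm{ACE}(w_n) = 1$ such that $\mathrm{ACE}_{\mathcal{I}}(w_n)\ge n$, where $\mathrm{ACE}_{\mathcal{I}}$ is taken with $\Sigma=\Sigma_n$ and $\Gamma$ any finite alphabet with at least two letters.
   Context: $\mathrm{Fact}_n(w)$ is the set of length-$n$ factors of $w$. For a nonempty word $v$ and integer $p\ge0$, $v^{p/|v|}$ is the prefix of length $p$ of $vvv\cdots$. For a nonempty finite word $u$, $\mathrm{E}(u) = \sup\{ r \in \mathbb{Q} : u = v^r \text{ for some nonempty } v\}$. For an infinite word $w$, $\mathrm{ACE}(w) = \limsup_{m\to\infty}\sup\{\mathrm{E}(u) : u\in\mathrm{Fact}_m(w)\}$. $\mathcal{I}$ is the set of injective morphisms $\Sigma^*\to\Gamma^*$ and $\mathrm{ACE}_{\mathcal{I}}(w) = \sup\{\mathrm{ACE}(h(w)) : h\in\mathcal{I}\}$. *)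

From HB Require Import structures.
From mathcomp Require Import all_boot all_order all_algebra.
From mathcomp Require Import boolp classical_sets reals ereal topology normedtype sequences.
From mathcomp Require Import Rstruct.
Set Implicit Arguments. Unset Strict Implicit. Unset Printing Implicit Defensive.
Import Order.TTheory GRing.Theory Num.Theory.
Local Open Scope classical_set_scope.
Local Open Scope ring_scope.

Notation R := Rdefinitions.R.

Definition iword (A : Type) := nat -> A.

Definition factor_at (A : Type) (w : iword A) (i m : nat) : seq A :=
  mkseq (fun j => w (i + j)) m.

Definition Fact (A : Type) (m : nat) (w : iword A) : set (seq A) :=
  [set u | exists i, u = factor_at w i m].

(* v^{p/|v|} : the prefix of length p of v v v ... (v nonempty) *)
Definition fpow (A : Type) (v : seq A) (p : nat) : seq A :=
  take p (flatten (nseq p v)).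

Definition Exp (A : eqType) (u : seq A) : \bar R :=
  ereal_sup [set (r%:E) | r in
     [set r : R | exists (v : seq A) (p : nat),
        size v != 0%N /\ r = (p%:R / (size v)%:R) /\ u = fpow v p]].

Definition ACE (A : eqType) (w : iword A) : \bar R :=
  limn_esup (fun m : nat => ereal_sup [set Exp u | u in Fact m w]).

Definition morph (S G : Type) (h : S -> seq G) (s : seq S) : seq G :=
  flatten (map h s).

Definition inj_morph (S G : Type) (h : S -> seq G) : Prop :=
  injective (morph h).

(* u is the infinite word h(w): every image h(w_0 ... w_{k-1}) is a prefix of u *)
Definition morph_image (S G : Type) (h : S -> seq G) (w : iword S) (u : iword G) : Prop :=
  forall k : nat, let p := morph h (mkseq w k) in mkseq u (size p) = p.

Definition ACE_I (S : Type) (G : eqType) (w : iword S) : \bar R :=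
  ereal_sup [set ACE u | u in
     [set u : iword G | exists h : S -> seq G, inj_morph h /\ morph_image h w u]].

From mathcomp Require Import all_boot all_order all_algebra.
From mathcomp Require Import boolp classical_sets reals ereal Rstruct.
From mathcomp Require Import topology normedtype sequences.
From mathcomp Require Import zify.

Set Implicit Arguments. Unset Strict Implicit. Unset Printing Implicit Defensive.
Import Order.TTheory GRing.Theory Num.Theory.

(* The witness [word] codes a binary word [bword] cut into blocks of length [n]:
   every such block is one of the 2n chunks b^s (~~ b)^(n - s), 1 <= s <= n,
   and [word] records which one.  Sending each letter back to its chunk is an
   injective uniform morphism whose image, over two letters, is [bword].
   [bword] is hierarchical: a level-(t+1) block is the concatenation of
   [radix t] level-t blocks, the first [n] of which are equal, so [bword] has
   arbitrarily long prefixes that are n-th powers.  Each block is determined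
   by, and encodes, a short label (unary codes behind a marker at level 0,
   binary digits spread over the non-copy children above).  Hence a repetition
   of length at least (n + 2) * blen t in [bword] has a period divisible by
   [blen t], and if the period is also divisible by [n], as for repetitions
   coming from [word] ([blen t] is 1 modulo [n]), the period is at least
   (radix t.+1 - n) * blen t.+1.  As [radix t] grows, long repetitions in
   [word] have exponent close to 1. *)

Lemma eq_from_bits a x y : x < 2 ^ a -> y < 2 ^ a ->
  (forall j, j < a -> odd (x %/ 2 ^ j) = odd (y %/ 2 ^ j)) -> x = y.
Proof.
elim: a x y => [|a IH] x y; first by rewrite expn0; case: x; case: y.
move=> lt_x lt_y hbits.
rewrite -(odd_double_half x) -(odd_double_half y).
have := hbits 0 (ltn0Sn a); rewrite !expn0 !divn1 => ->.
congr (_ + _.*2); apply: IH.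
- by rewrite -divn2 ltn_divLR // -expnSr.
- by rewrite -divn2 ltn_divLR // -expnSr.
move=> j lt_ja; have := hbits j.+1 lt_ja.
by rewrite expnSr (mulnC (2 ^ j)) !divnMA !divn2.
Qed.

Lemma mkseq_mul_flatten (T : Type) (f : nat -> T) a b :
  mkseq f (a * b) = flatten (mkseq (fun k => mkseq (fun j => f (k * b + j)) b) a).
Proof.
elim: a => [|a IH] //.
rewrite mulSn addnC /mkseq iotaD map_cat -/(mkseq f (a * b)) IH.
rewrite -addn1 iotaD map_cat flatten_cat /= cats0 add0n.
congr (_ ++ _).
by rewrite -{1}[a * b]addn0 iotaDl -map_comp; apply: eq_map => j /=; rewrite addnC.
Qed.

Lemma size_flatten_mkseq (T : Type) (f : nat -> seq T) a b :
  (forall k, size (f k) = b) -> size (flatten (mkseq f a)) = a * b.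
Proof.
move=> sf; elim: a => [|a IH] //.
by rewrite mkseqS -cats1 flatten_cat size_cat IH /= cats0 sf mulSnr.
Qed.

Lemma flatten_mkseq_inj (T : Type) (f g : nat -> seq T) a b :
  (forall k, size (f k) = b) -> (forall k, size (g k) = b) ->
  flatten (mkseq f a) = flatten (mkseq g a) -> forall k, k < a -> f k = g k.
Proof.
move=> sf sg; elim: a => [|a IH] // e k.
have [e1 e2] : flatten (mkseq f a) = flatten (mkseq g a) /\ f a = g a.
  move: e; rewrite !mkseqS -!cats1 !flatten_cat /= !cats0 => e.
  have := congr1 (take (a * b)) e; have := congr1 (drop (a * b)) e.
  by rewrite !take_size_cat ?drop_size_cat ?(size_flatten_mkseq _ sf) ?(size_flatten_mkseq _ sg).
rewrite ltnS leq_eqVlt => /orP[/eqP -> // | lt_ka]; exact: IH.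
Qed.

Lemma addn_mul_inj d a b a' b' : a < d -> a' < d -> a + d * b = a' + d * b' -> a = a' /\ b = b'.
Proof.
move=> lt_a lt_a' e; have d_gt0 : 0 < d by lia.
have := congr1 (modn^~ d) e; have := congr1 (divn^~ d) e.
rewrite /= !(mulnC d) !(addnC _ (_ * d)) !divnMDl // !modnMDl !divn_small // !modn_small //.
by rewrite !addn0 => -> ->.
Qed.

Lemma exists_crossing (f : nat -> nat) l t0 t1 : t0 <= t1 -> f t0 <= l -> l < f t1 ->
  exists2 t, t0 <= t & f t <= l < f t.+1.
Proof.
move=> + le_f0; elim: t1 => [|t1 IH] le_t01 lt_l1.
  by move: le_t01 le_f0; rewrite leqn0 => /eqP -> ?; exfalso; lia.
have [e | ne] := eqVneq t0 t1.+1; first by rewrite e in le_f0; exfalso; lia.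
have [le_f1 | lt_f1] := leqP (f t1) l; last by apply: IH; lia.
by exists t1; [lia | apply/andP].
Qed.

Lemma exists_aligned_after x L : 0 < L -> exists U, x <= U * L < x + L.
Proof.
move=> L_gt0; exists ((x + L.-1) %/ L).
have := divn_eq (x + L.-1) L; have := ltn_pmod (x + L.-1) L_gt0; lia.
Qed.

Definition chunk (b : bool) (s m : nat) := nseq s b ++ nseq (m - s) (~~ b).

Lemma size_chunk b s m : s <= m -> size (chunk b s m) = m.
Proof. by move=> le_sm; rewrite size_cat !size_nseq subnKC. Qed.

Lemma chunk_inj b b' s s' m : 0 < s <= m -> 0 < s' <= m ->
  chunk b s m = chunk b' s' m -> b = b' /\ s = s'.
Proof.
move=> /andP[s_gt0 le_sm] /andP[s'_gt0 le_s'm] e.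
have eb : b = b' by move: e; case: (s) (s') s_gt0 s'_gt0 => [|?] [|?] // _ _ [].
split => //; move/(congr1 (count (pred1 b))): e.
by rewrite -eb !count_cat !count_nseq /= eqxx; case: (b) => /=; lia.
Qed.

Lemma chunk_find (c : seq bool) :
  (forall i j, i < j < size c -> nth false c i != nth false c i.+1 ->
     nth false c j = nth false c i.+1) ->
  c = chunk (head false c) (find (predC1 (head false c)) c) (size c).
Proof.
move=> run; set b := head false c; set s := find _ c.
have le_s : s <= size c := find_size _ _.
apply: (@eq_from_nth _ false); first by rewrite size_chunk.
move=> j lt_j; rewrite nth_cat size_nseq.
have [lt_js | le_sj] := ltnP j s.
  by rewrite nth_nseq lt_js; have /negbFE/eqP := before_find false lt_js.
have lt_sc : s < size c by lia.
have c_s : nth false c s = ~~ b.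
  have := @nth_find _ false (predC1 b) c; rewrite has_find => /(_ lt_sc) /=.
  by case: (nth _ _ _); case: (b).
have s_gt0 : 0 < s by rewrite lt0n; apply/eqP => s0; move: c_s; rewrite s0 nth0 -/b; case: (b).
have lt_s1 : s.-1 < s by rewrite ltn_predL.
have c_s1 : nth false c s.-1 = b by have /negbFE/eqP := before_find false lt_s1.
rewrite nth_nseq ifT; last lia.
rewrite (run s.-1 j) ?prednK //; first lia.
by rewrite c_s1 c_s; case: (b).
Qed.

Definition periodic (A : Type) (w : iword A) (x p l : nat) :=
  forall j, j < l -> w (x + j) = w (x + p + j).

Section Powers.
Variable A : Type.
Implicit Types (u v : seq A) (w : iword A).
Local Open Scope nat_scope.

Lemma size_flatten_nseq v k : size (flatten (nseq k v)) = k * size v.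
Proof. by elim: k => [|k IH] //=; rewrite size_cat IH mulSn. Qed.

Lemma nth_flatten_nseq x0 v k j : 0 < size v -> j < k * size v ->
  nth x0 (flatten (nseq k v)) j = nth x0 v (j %% size v).
Proof.
move=> v_gt0; elim: k j => [|k IH] j //=; rewrite nth_cat mulSn => lt_j.
case: ltnP => [lt_jv | le_vj]; first by rewrite modn_small.
rewrite IH; last lia.
by rewrite -[in RHS](subnK le_vj) modnDr.
Qed.

Lemma size_fpow v p : 0 < size v -> size (fpow v p) = p.
Proof. by move=> v_gt0; rewrite size_takel // size_flatten_nseq leq_pmulr. Qed.

Lemma nth_fpow x0 v p j : 0 < size v -> j < p ->
  nth x0 (fpow v p) j = nth x0 v (j %% size v).
Proof.
move=> v_gt0 lt_j; rewrite nth_take // nth_flatten_nseq //.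
by apply: leq_trans lt_j _; rewrite leq_pmulr.
Qed.

Lemma fpow_size u : fpow u (size u) = u.
Proof. by case: u => [|a u] //; rewrite /fpow /= take_size_cat. Qed.

Lemma nth_factor_at x0 w i m j : j < m -> nth x0 (factor_at w i m) j = w (i + j).
Proof. exact: nth_mkseq. Qed.

Lemma size_factor_at w i m : size (factor_at w i m) = m.
Proof. exact: size_mkseq. Qed.

Lemma periodic_of_fpow w i m v : 0 < size v ->
  factor_at w i m = fpow v m -> periodic w i (size v) (m - size v).
Proof.
move=> v_gt0 e j lt_j; have nthE k : k < m -> w (i + k) = nth (w i) v (k %% size v).
  by move=> lt_k; rewrite -(@nth_factor_at (w i) w i m k lt_k) e nth_fpow.
by rewrite -addnA (addnC (size v)) !nthE ?modnDr //; lia.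
Qed.

Lemma periodic_mod w i q m j : periodic w i q (m - q) -> j < m ->
  w (i + j) = w (i + j %% q).
Proof.
move=> per; rewrite {1 2}(divn_eq j q); elim: (j %/ q) => [|k IH] lt_j; first by rewrite add0n.
by rewrite mulSn in lt_j *; rewrite -!addnA [i + _]addnA -per ?IH //; lia.
Qed.

Lemma factor_at_fpow w i q m : 0 < q -> periodic w i q (m - q) ->
  factor_at w i m = fpow (factor_at w i q) m.
Proof.
move=> q_gt0 per; apply: (@eq_from_nth _ (w i)); first by rewrite size_fpow ?size_factor_at.
rewrite size_factor_at => j lt_j.
by rewrite nth_fpow ?size_factor_at // !nth_factor_at ?ltn_pmod // (periodic_mod per).
Qed.
End Powers.

Section Limsup.
Local Open Scope ereal_scope.

Lemma limn_esup_le (u : (\bar R)^nat) x :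
  (exists N, forall m, (N <= m)%N -> u m <= x) -> limn_esup u <= x.
Proof.
case=> N le_ux; rewrite limn_esup_lim (cvg_lim _ (@cvg_esups_inf _ u)) //.
apply: le_trans (ereal_inf_lbound _) _; first by exists N.
by apply: ge_ereal_sup => _ [m /= le_Nm <-]; apply: le_ux.
Qed.

Lemma le_limn_esup (u : (\bar R)^nat) x :
  (forall N, exists2 m, (N <= m)%N & x <= u m) -> x <= limn_esup u.
Proof.
move=> ge_ux; rewrite limn_esup_lim (cvg_lim _ (@cvg_esups_inf _ u)) //.
apply: le_ereal_inf_tmp => _ [N _ <-]; have [m le_Nm le_xu] := ge_ux N.
by apply: le_trans le_xu _; apply: ereal_sup_ubound; exists m.
Qed.
End Limsup.

Section Exponent.
Variable A : eqType.
Implicit Types (u v : seq A) (w : iword A).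
Local Open Scope ring_scope.
Local Open Scope ereal_scope.

Lemma Exp_ge u v p : (0 < size v)%N -> u = fpow v p -> (p%:R / (size v)%:R)%:E <= Exp u.
Proof.
move=> v_gt0 e; apply: ereal_sup_ubound; exists (p%:R / (size v)%:R)%R => //.
by exists v, p; rewrite -lt0n.
Qed.

Lemma Exp_ge1 u : (0 < size u)%N -> 1 <= Exp u.
Proof.
move=> u_gt0; have := Exp_ge u_gt0 (esym (fpow_size u)).
by rewrite divff // pnatr_eq0 -lt0n.
Qed.

Lemma Exp_le u (x : R) :
  (forall v p, (0 < size v)%N -> u = fpow v p -> p%:R / (size v)%:R <= x)%R -> Exp u <= x%:E.
Proof.
move=> le_x; apply: ge_ereal_sup => _ [r [v [p [v_gt0 [-> e]]]] <-].
by rewrite lee_fin le_x // lt0n.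
Qed.

Lemma ACE_ge1 w : 1 <= ACE w.
Proof.
apply: le_limn_esup => N; exists N.+1 => //.
have u_gt0 : (0 < size (factor_at w 0 N.+1))%N by rewrite size_factor_at.
apply: le_trans (Exp_ge1 u_gt0) _.
by apply: ereal_sup_ubound; exists (factor_at w 0 N.+1) => //; exists 0%N.
Qed.

Lemma ACE_le_periods w (T : nat) :
  (exists M, forall i q m, (M <= m)%N -> (0 < q < m)%N -> periodic w i q (m - q) ->
     ((m - q) * T.+1 <= q)%N) ->
  ACE w <= (T.+2%:R / T.+1%:R)%:E.
Proof.
case=> M short; apply: limn_esup_le; exists M => m le_Mm.
apply: ge_ereal_sup => _ [_ [i ->] <-]; apply: Exp_le => v p v_gt0 e.
have ep : p = m by rewrite -(size_fpow p v_gt0) -e size_factor_at.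
subst p; rewrite ler_pdivrMr ?ltr0n // mulrAC ler_pdivlMr ?ltr0n // -!natrM ler_nat.
have [le_mv | lt_vm] := leqP m (size v); first nia.
by have := short i (size v) m le_Mm (introT andP (conj v_gt0 lt_vm)) (periodic_of_fpow v_gt0 e); nia.
Qed.

Lemma ACE_eq1 w : (forall T, exists M, forall i q m, (M <= m)%N -> (0 < q < m)%N ->
  periodic w i q (m - q) -> ((m - q) * T <= q)%N) -> ACE w = 1.
Proof.
move=> short; apply/eqP; rewrite eq_le ACE_ge1 andbT; apply/lee_addgt0Pr => e e_gt0.
set T := Num.truncn e^-1; have lt_eT : (e^-1 < T.+1%:R)%R := truncnS_gt _.
apply: le_trans (ACE_le_periods (short T.+1)) _.
rewrite lee_fin -natr1 mulrDl divff ?pnatr_eq0 // mul1r lerD2l.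
by rewrite -[e]invrK lef_pV2 ?ltW // ?posrE ?invr_gt0 ?ltr0n.
Qed.

Lemma ACE_ge_power w k : (0 < k)%N ->
  (forall N, exists i q, (N <= q)%N /\ periodic w i q (k.-1 * q)) -> k%:R%:E <= ACE w.
Proof.
move=> k_gt0 powers; apply: le_limn_esup => N.
have [i [q [lt_Nq per]]] := powers N.+1; have q_gt0 : (0 < q)%N by lia.
exists (k * q)%N; first nia.
apply: le_trans (ereal_sup_ubound _); last by exists (factor_at w i (k * q)) => //; exists i.
have size_q : (0 < size (factor_at w i q))%N by rewrite size_factor_at.
have per' : periodic w i q (k * q - q) by rewrite -subn1 mulnBl mul1n in per.
rewrite (factor_at_fpow q_gt0 per').
apply: le_trans (Exp_ge size_q (erefl _)); rewrite size_factor_at natrM mulfK //.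
by rewrite pnatr_eq0 -lt0n.
Qed.
End Exponent.

(** * Uniform morphisms *)

Section UniformMorphism.
Variables (S G : Type) (h : S -> seq G) (k : nat).
Hypotheses (k_gt0 : (0 < k)%N) (size_h : forall x, size (h x) = k).
Local Open Scope nat_scope.

Lemma size_morph s : size (morph h s) = k * size s.
Proof. by elim: s => [|x s IH]; rewrite /morph /= ?muln0 // size_cat size_h -/(morph h s) IH mulnS. Qed.

Lemma uniform_inj_morph : injective h -> inj_morph h.
Proof.
move=> inj_h s; elim: s => [|x s IH] [|x' s'] //=; rewrite /morph /=.
- by move/(congr1 size)/eqP; rewrite /= size_cat size_h eq_sym addn_eq0 eqn0Ngt k_gt0.
- by move/(congr1 size)/eqP; rewrite /= size_cat size_h addn_eq0 eqn0Ngt k_gt0.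
move=> e; have := congr1 (take k) e; have := congr1 (drop k) e.
by rewrite !take_size_cat ?drop_size_cat ?size_h // => /IH -> /inj_h ->.
Qed.

Lemma nth_morph y0 x0 s j : j < k * size s ->
  nth y0 (morph h s) j = nth y0 (h (nth x0 s (j %/ k))) (j %% k).
Proof.
elim: s j => [|x s IH] j /=; first by rewrite muln0.
rewrite /morph /= nth_cat size_h mulnS => lt_j.
case: ltnP => [lt_jk | le_kj]; first by rewrite divn_small // modn_small.
rewrite IH; last lia.
by rewrite -[in RHS](subnK le_kj) divnDr ?dvdnn // divnn k_gt0 addn1 modnDr.
Qed.

Lemma morph_image_uniform (w : iword S) (u : iword G) :
  (forall q s, s < k -> u (q * k + s) = nth (u 0) (h (w q)) s) -> morph_image h w u.
Proof.
move=> uE K /=; apply: (@eq_from_nth _ (u 0)); rewrite size_mkseq // => j lt_j.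
rewrite nth_mkseq //; rewrite size_morph size_mkseq in lt_j.
rewrite (@nth_morph (u 0) (w 0)) ?size_mkseq // nth_mkseq; last by rewrite ltn_divLR // mulnC.
by rewrite -uE ?ltn_pmod // -divn_eq.
Qed.
End UniformMorphism.

(** * A binary word with hierarchical n-th powers *)

Section Construction.
Variable n : nat.
Hypothesis n_gt0 : 0 < n.

Definition radix t := n * (t + 4) + 1.

Definition collapse k := if k < n then 0 else k.

Definition cdigit t u := collapse (u %% radix t).

(* A non-copy block of digit [k >= n] carries bit [k - n] of the collapsed
   digit of its grandparent, so that the children of a block spell out its
   whole label; copy blocks inherit the bit of their parent.  The fuel [u.+1]
   suffices because the block index decreases at each step (index 0 gives
   [false]). *)
Fixpoint ibit_fuel (F t u : nat) : bool :=
  if F is F'.+1 then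
    if u %% radix t < n then ibit_fuel F' t.+1 (u %/ radix t)
    else odd (cdigit t.+2 (u %/ radix t %/ radix t.+1) %/ 2 ^ (u %% radix t - n))
  else false.

Definition ibit t u := ibit_fuel u.+1 t u.

Definition label t u := (cdigit t u, cdigit t.+1 (u %/ radix t), ibit t u).

Definition label_code (l : nat * nat * bool) := l.1.1 + radix 0 * (l.1.2 + radix 1 * l.2).

(* The factor [n] makes [blen0] congruent to 1 modulo [n]. *)
Definition nseg := (radix 0 * radix 1 * n).*2.+1.

Definition seg_len := n.*2.+1.

Definition blen0 := 3 * n + nseg * seg_len + n.

Definition base_block (c o : nat) : bool :=
  if o < 3 * n then false
  else if 3 * n + nseg * seg_len <= o then true
  else (o - 3 * n) %% seg_len < n + ((o - 3 * n) %/ seg_len == c).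

Definition bword i := base_block (label_code (label 0 (i %/ blen0))) (i %% blen0).

Fixpoint blen t := if t is t'.+1 then radix t' * blen t' else blen0.

Definition block t u := mkseq (fun j => bword (u * blen t + j)) (blen t).

Lemma radix_gt t : n.+1 < radix t.
Proof. rewrite /radix; nia. Qed.

Lemma radix_gt0 t : 0 < radix t.
Proof. by rewrite /radix addn1. Qed.

Lemma cdigit_lt t u : cdigit t u < radix t.
Proof. by rewrite /cdigit /collapse; case: ifP; rewrite ?radix_gt0 ?ltn_pmod ?radix_gt0. Qed.

Lemma collapse_inj k k' : n <= k -> collapse k = collapse k' -> k = k'.
Proof. by rewrite /collapse => le_nk; rewrite ltnNge le_nk /=; case: ifP => //; lia. Qed.

Lemma radix_lt_exp t : radix t.+2 < 2 ^ (radix t - n).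
Proof.
have := ltn_expl (n * (t + 3)) (isT : 1 < 2).
rewrite (_ : radix t - n = (n * (t + 3)).+1) ?expnS /radix; nia.
Qed.

Lemma ibit_fuel0 F t : ibit_fuel F t 0 = false.
Proof. by elim: F t => [|F IH] t //=; rewrite mod0n n_gt0 div0n IH. Qed.

Lemma ibit_fuel_indep F F' t u : u < F -> u < F' -> ibit_fuel F t u = ibit_fuel F' t u.
Proof.
elim: F F' t u => [|F IH] [|F'] t u //= lt_uF lt_uF'.
case: ifP => // _; have [-> | u_gt0] := posnP u; first by rewrite div0n !ibit_fuel0.
have : u %/ radix t < u by rewrite ltn_Pdiv // (leq_trans _ (radix_gt t)).
by move=> ?; apply: IH; lia.
Qed.

Lemma ibit_step t P k : k < radix t ->
  ibit t (P * radix t + k) =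
  if k < n then ibit t.+1 P else odd (cdigit t.+2 (P %/ radix t.+1) %/ 2 ^ (k - n)).
Proof.
move=> lt_kr; have r_gt0 := radix_gt0 t.
rewrite {1}/ibit /= modnMDl modn_small // divnMDl // divn_small // addn0.
case: ifP => // _; have [-> | P_gt0] := posnP P; first by rewrite /ibit !ibit_fuel0.
apply: ibit_fuel_indep => //.
by rewrite ltn_addr // ltn_Pmulr // (leq_trans _ (radix_gt t)).
Qed.

Lemma label_step t P k : k < radix t ->
  label t (P * radix t + k) =
  (collapse k, cdigit t.+1 P,
   if k < n then ibit t.+1 P else odd (cdigit t.+2 (P %/ radix t.+1) %/ 2 ^ (k - n))).
Proof.
move=> lt_kr; have r_gt0 := radix_gt0 t.
by rewrite /label ibit_step // /cdigit modnMDl modn_small // divnMDl // divn_small // addn0.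
Qed.

Lemma blen0_gt0 : 0 < blen0.
Proof. by rewrite /blen0 addn_gt0 n_gt0 orbT. Qed.

Lemma bwordE v o : o < blen0 -> bword (v * blen0 + o) = base_block (label_code (label 0 v)) o.
Proof.
move=> lt_o; have L_gt0 := blen0_gt0.
by rewrite /bword divnMDl // divn_small // addn0 modnMDl modn_small.
Qed.

Lemma block0 v : block 0 v = mkseq (base_block (label_code (label 0 v))) blen0.
Proof. by apply/eq_in_map => o; rewrite mem_iota add0n => /andP[_ lt_o]; rewrite bwordE. Qed.

Lemma block_step t P :
  block t.+1 P = flatten (mkseq (fun k => block t (P * radix t + k)) (radix t)).
Proof.
rewrite /block /= mkseq_mul_flatten; congr flatten; apply: eq_map => k.
by apply: eq_map => j /=; congr bword; nia.
Qed.

Lemma size_block t u : size (block t u) = blen t.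
Proof. exact: size_mkseq. Qed.

Lemma base_block_marker c o : o < 3 * n -> base_block c o = false.
Proof. by rewrite /base_block => ->. Qed.

Lemma base_block_tail c o : 3 * n + nseg * seg_len <= o -> base_block c o.
Proof. by rewrite /base_block => le_o; rewrite le_o; case: ifP => //; lia. Qed.

Lemma base_block_seg c j e : j < nseg -> e < seg_len ->
  base_block c (3 * n + j * seg_len + e) = (e < n + (j == c)).
Proof.
move=> lt_j lt_e; have : j.+1 * seg_len <= nseg * seg_len by rewrite leq_mul2r lt_j orbT.
rewrite /base_block mulSn => ?; rewrite ifF ?ifF; [|lia..].
by rewrite -addnA addKn modnMDl modn_small // divnMDl // divn_small // addn0.
Qed.

Lemma segment_lt_blen0 J e : J < nseg -> e < seg_len -> 3 * n + J * seg_len + e < blen0.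
Proof.
move=> lt_J lt_e; have : J.+1 * seg_len <= nseg * seg_len by rewrite leq_mul2r lt_J orbT.
by rewrite /blen0 mulSn; lia.
Qed.

Lemma label_code_lt v : label_code (label 0 v) < nseg.
Proof.
rewrite /label_code /nseg /=; have := cdigit_lt 0 v; have := cdigit_lt 1 (v %/ radix 0).
set a := cdigit 0 v; set b := cdigit 1 _; set r0 := radix 0; set r1 := radix 1 => lt_b lt_a.
have lt_c : b + r1 * ibit 0 v < r1 * 2 by case: (ibit 0 v) => /=; lia.
have : a + r0 * (b + r1 * ibit 0 v) < r0 * (r1 * 2) by nia.
by rewrite -mul2n mulnA mulnC ltnS; move/ltnW/leq_trans; apply; nia.
Qed.

Lemma label_code_inj a b c a' b' c' :
  a < radix 0 -> a' < radix 0 -> b < radix 1 -> b' < radix 1 ->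
  label_code (a, b, c) = label_code (a', b', c') -> (a, b, c) = (a', b', c').
Proof.
rewrite /label_code /= => lt_a lt_a' lt_b lt_b' /addn_mul_inj[// | // | -> /addn_mul_inj[// | // | ->]].
by case: c c' => [] [].
Qed.

Lemma eq_block_of_label t u u' : label t u = label t u' -> block t u = block t u'.
Proof.
elim: t u u' => [|t IH] u u' e; first by rewrite !block0 e.
rewrite !block_step; congr flatten; apply/eq_in_map => k.
rewrite mem_iota add0n => /andP[_ lt_k]; apply: IH.
by move: e; rewrite !label_step // /label => -[-> -> ->].
Qed.

Lemma eq_label_of_block0 v v' : block 0 v = block 0 v' -> label 0 v = label 0 v'.
Proof.
rewrite !block0 => e; set c := label_code (label 0 v).
have lt_c : c < nseg := label_code_lt v.
have lt_o : 3 * n + c * seg_len + n < blen0 by rewrite segment_lt_blen0 // /seg_len; lia.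
have := congr1 (fun s => nth false s (3 * n + c * seg_len + n)) e.
rewrite /= !nth_mkseq // !base_block_seg //; try by rewrite /seg_len; lia.
rewrite eqxx /=; case: eqP => [ec _ | _]; last lia.
by move: ec; rewrite /label => /label_code_inj; apply; apply: cdigit_lt.
Qed.

Lemma eq_label_of_block t u u' : block t u = block t u' -> label t u = label t u'.
Proof.
elim: t u u' => [|t IH] u u'; first exact: eq_label_of_block0.
rewrite !block_step => /(flatten_mkseq_inj (fun k => size_block t _) (fun k => size_block t _)) e.
have e_sub k : k < radix t -> label t (u * radix t + k) = label t (u' * radix t + k).
  by move=> lt_k; apply/IH/e.
have := e_sub 0 (radix_gt0 t); rewrite !label_step ?radix_gt0 // n_gt0 => -[e1 e2].
rewrite /label e1 e2; congr (_, _, _); apply: (@eq_from_bits (radix t - n)).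
- exact: ltn_trans (cdigit_lt _ _) (radix_lt_exp t).
- exact: ltn_trans (cdigit_lt _ _) (radix_lt_exp t).
move=> j lt_j; have lt_nj : n + j < radix t by lia.
have nj : (n + j < n) = false by lia.
by have := e_sub _ lt_nj; rewrite !label_step // nj addKn => -[].
Qed.

Lemma segment_decomp o : 3 * n <= o -> o < 3 * n + nseg * seg_len ->
  exists J e, [/\ J < nseg, e < seg_len & o = 3 * n + J * seg_len + e].
Proof.
move=> ge_o lt_o; have sl_gt0 : 0 < seg_len by [].
exists ((o - 3 * n) %/ seg_len), ((o - 3 * n) %% seg_len); split.
- by rewrite ltn_divLR //; lia.
- by rewrite ltn_mod.
- by have := divn_eq (o - 3 * n) seg_len; lia.
Qed.

Lemma base_block_true_soon c o : 0 < o -> o < blen0 ->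
  exists2 j, j < 3 * n & o + j < blen0 /\ base_block c (o + j).
Proof.
move=> o_gt0 lt_o; have tail := base_block_tail c; have n3_gt0 : 0 < 3 * n by lia.
have [le_o3 | gt_o3] := leqP o (3 * n).
  exists (3 * n - o); first lia.
  rewrite subnKC //; split; first by rewrite /blen0; lia.
  by have := @base_block_seg c 0 0; rewrite mul0n !addn0 => -> //; rewrite ltn_addr.
have [le_ot | lt_ot] := leqP (3 * n + nseg * seg_len) o.
  by exists 0 => //; rewrite addn0 tail.
have [J [e [lt_J lt_e eo]]] := segment_decomp (ltnW gt_o3) lt_ot; subst o.
have lt_nJ : J.+1 * seg_len <= nseg * seg_len by rewrite leq_mul2r lt_J orbT.
have [lt_en | ge_en] := ltnP e (n + (J == c)).
  by exists 0 => //; rewrite addn0 base_block_seg.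
exists (seg_len - e); first by move: ge_en; rewrite /seg_len; case: (J == c); lia.
have -> : 3 * n + J * seg_len + e + (seg_len - e) = 3 * n + J.+1 * seg_len + 0.
  by rewrite mulSn; lia.
split; first by move: lt_nJ; rewrite /blen0 mulSn; lia.
have [lt_J1 | ge_J1] := ltnP J.+1 nseg; first by rewrite base_block_seg // ltn_addr.
by rewrite tail // addn0 leq_add2l leq_mul2r ge_J1 orbT.
Qed.

Lemma marker_aligned a : (forall j, j < 3 * n -> bword (a + j) = false) -> blen0 %| a.
Proof.
move=> marker; apply: contraT; rewrite /dvdn -lt0n => o_gt0.
have lt_o : a %% blen0 < blen0 by rewrite ltn_mod blen0_gt0.
have [j lt_j [lt_oj]] := base_block_true_soon (label_code (label 0 (a %/ blen0))) o_gt0 lt_o.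
by rewrite -bwordE // addnA -divn_eq marker.
Qed.

Lemma base_block_run c o : 0 < o -> o < blen0 -> base_block c o.-1 != base_block c o ->
  forall k, k < n -> o + k < blen0 /\ base_block c (o + k) = base_block c o.
Proof.
move=> o_gt0 lt_o change k lt_k; have sl_gt : n.+1 < seg_len by rewrite /seg_len; lia.
have [lt_o3 | ge_o3] := ltnP o (3 * n).
  by exfalso; move: change; rewrite !base_block_marker ?eqxx //; lia.
have [lt_ot | ge_ot] := ltnP o (3 * n + nseg * seg_len); last first.
  have [gt_ot | eq_ot] := ltnP (3 * n + nseg * seg_len) o.
    by exfalso; move: change; rewrite !base_block_tail ?eqxx //; lia.
  by rewrite !base_block_tail; move: lt_o; rewrite /blen0; lia.
have [J [e [lt_J lt_e eo]]] := segment_decomp ge_o3 lt_ot; subst o.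
have [e0 | e_gt0] := posnP e.
  by subst e; rewrite -addnA !base_block_seg ?segment_lt_blen0 //; lia.
have e_def : e = n + (J == c).
  move: change; rewrite (_ : _.-1 = 3 * n + J * seg_len + e.-1); last lia.
  rewrite !base_block_seg //; last lia.
  by case: (J == c) => /=; case: ltnP; case: ltnP => //; lia.
have lt_ek : e + k < seg_len by move: e_def; rewrite /seg_len; case: (J == c) => /=; lia.
by rewrite -[_ + e + k]addnA !base_block_seg ?segment_lt_blen0 //; split => //; lia.
Qed.

Lemma bword_run i : bword i != bword i.+1 -> forall k, k < n -> bword (i.+1 + k) = bword i.+1.
Proof.
move=> change k lt_k; have lt_o : i.+1 %% blen0 < blen0 by rewrite ltn_mod blen0_gt0.
have e := divn_eq i.+1 blen0; move: change; rewrite e -addnA.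
set o := i.+1 %% blen0 in e lt_o *; set v := i.+1 %/ blen0 in e *.
have [o0 | o_gt0] := posnP o.
  by rewrite o0 add0n !bwordE ?base_block_marker //; rewrite /blen0; lia.
have -> : i = v * blen0 + o.-1 by lia.
have lt_o1 : o.-1 < blen0 by lia.
rewrite (bwordE _ lt_o1) (bwordE _ lt_o) => change.
by have [lt_ok run] := base_block_run o_gt0 lt_o change lt_k; rewrite !bwordE.
Qed.

Lemma blen_gt0 t : 0 < blen t.
Proof. by elim: t => [|t IH] /=; rewrite ?blen0_gt0 // muln_gt0 radix_gt0. Qed.

Lemma blen_lt t : blen t < blen t.+1.
Proof. by rewrite /= ltn_Pmull ?blen_gt0 // (leq_trans _ (radix_gt t)). Qed.

Lemma blen_gt t : t < blen t.
Proof. by elim: t => [|t IH]; [exact: blen0_gt0 | exact: leq_ltn_trans (blen_lt t)]. Qed.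

Lemma blen_modn t : blen t = 1 %[mod n].
Proof.
suff [K ->] : exists K, blen t = K * n + 1 by rewrite modnMDl.
elim: t => [|t [K IH]] /=.
  by exists (4 + (radix 0 * radix 1 * 2 * (n * 2 + 1) + 2)); rewrite /blen0 /nseg /seg_len -!muln2; nia.
by exists ((t + 4) * (K * n + 1) + K); rewrite IH /radix; nia.
Qed.

Lemma dvdn_mul_blen E t : (n %| E * blen t) = (n %| E).
Proof. by rewrite /dvdn -modnMmr blen_modn modnMmr muln1. Qed.

Lemma block_copy t k : k < n -> block t k = block t 0.
Proof.
move=> lt_kn; apply: eq_block_of_label.
have lt_kr : k < radix t by apply: ltn_trans (radix_gt t); lia.
have := label_step 0 lt_kr; have := label_step 0 (radix_gt0 t).
by rewrite !mul0n !add0n => -> ->; rewrite /collapse lt_kn n_gt0.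
Qed.

Lemma nth_block t u s : s < blen t -> nth false (block t u) s = bword (u * blen t + s).
Proof. exact: nth_mkseq. Qed.

Lemma bword_prefix_power t : periodic bword 0 (blen t) (n.-1 * blen t).
Proof.
move=> j lt_j; have lt_s : j %% blen t < blen t by rewrite ltn_mod blen_gt0.
have lt_k : (j %/ blen t).+1 < n by rewrite -ltn_predRL ltn_divLR ?blen_gt0.
rewrite !add0n (divn_eq j (blen t)) addnA -mulSn -!nth_block //.
by rewrite !block_copy //; apply: ltnW.
Qed.

Lemma periodic_block t x p l U D : periodic bword x p l -> p = D * blen t ->
  x <= U * blen t -> U.+1 * blen t <= x + l -> block t U = block t (U + D).
Proof.
move=> per ep le_x le_l; subst p; apply/eq_in_map => s; rewrite mem_iota add0n => /andP[_ lt_s].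
have lt_j : U * blen t + s - x < l by move: le_l; rewrite mulSn; lia.
have := per _ lt_j; rewrite -!addnA addnCA subnKC; last lia.
by rewrite mulnDl addnCA addnA.
Qed.

Lemma exists_noncopy t U : exists2 j, j <= n & n <= (U + j) %% radix t.
Proof.
have [le_nU | lt_Un] := leqP n (U %% radix t); first by exists 0; rewrite ?addn0.
exists (n - U %% radix t); first exact: leq_subr.
have lt_nr : n < radix t := ltnW (radix_gt t).
rewrite -modnDml subnKC; last exact: ltnW.
by rewrite modn_small.
Qed.

Lemma periodic_label t x p l : periodic bword x p l -> (n + 2) * blen t <= l -> blen t %| p ->
  exists2 y, n <= y %% radix t & label t y = label t (y + p %/ blen t).
Proof.
move=> per le_l dvd_p; have [U /andP[le_xU lt_Ux]] := exists_aligned_after x (blen_gt0 t).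
have [j le_jn noncopy] := exists_noncopy t U.
exists (U + j) => //; apply: eq_label_of_block.
apply: (periodic_block per); [by rewrite divnK | nia | nia].
Qed.

Lemma radix_dvd_of_cdigit t y D : n <= y %% radix t -> cdigit t y = cdigit t (y + D) -> radix t %| D.
Proof.
move=> noncopy /(collapse_inj noncopy) /eqP.
by rewrite -{1}[y]addn0 eqn_modDl mod0n eq_sym.
Qed.

Lemma periodic_blen_dvd t x p l : periodic bword x p l -> (n + 2) * blen t <= l -> blen t %| p.
Proof.
elim: t x p l => [|t IH] x p l per le_l.
  have [U /andP[le_xU lt_Ux]] := exists_aligned_after x blen0_gt0.
  rewrite -(dvdn_addr _ (dvdn_mull U (dvdnn blen0))); apply: marker_aligned => j lt_j.
  have lt_3n : 3 * n < blen0 by rewrite /blen0; lia.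
  have le_2l : 2 * blen0 <= l by apply: leq_trans le_l; rewrite leq_mul2r; lia.
  have lt_jl : U * blen0 - x + j < l by lia.
  have e1 : x + (U * blen0 - x + j) = U * blen0 + j by lia.
  have e2 : x + p + (U * blen0 - x + j) = U * blen0 + p + j by lia.
  have := per _ lt_jl; rewrite e1 e2 => <-.
  by rewrite bwordE ?base_block_marker //; lia.
have le_l' : (n + 2) * blen t <= l by apply: leq_trans le_l; rewrite leq_mul2l ltnW ?blen_lt ?orbT.
have dvd_p := IH x p l per le_l'.
have [y noncopy [e _ _]] := periodic_label per le_l' dvd_p.
by rewrite /= -(divnK dvd_p) dvdn_pmul2r ?blen_gt0 // (radix_dvd_of_cdigit noncopy e).
Qed.

Lemma collapse_shift d P E : n < d -> 0 < E -> n %| E ->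
  collapse (P %% d) = collapse ((P + E) %% d) -> d - n <= E.
Proof.
move=> lt_nd E_gt0 dvd_E same; rewrite leqNgt; apply/negP => lt_E.
have [le_nP | lt_Pn] := leqP n (P %% d).
  move/(collapse_inj le_nP)/eqP: same; rewrite -{1}[P]addn0 eqn_modDl mod0n eq_sym => dvd_dE.
  by have := dvdn_leq E_gt0 dvd_dE; lia.
have le_nE := dvdn_leq E_gt0 dvd_E.
move: same; rewrite /collapse lt_Pn -modnDml modn_small.
  by case: ifP => //; lia.
by have := ltn_pmod P (ltn_trans n_gt0 lt_nd); lia.
Qed.

Lemma period_lower_bound t x p l : periodic bword x p l -> (n + 2) * blen t <= l ->
  0 < p -> n %| p -> (radix t.+1 - n) * blen t.+1 <= p.
Proof.
move=> per le_l p_gt0 dvd_np; have dvd_p := periodic_blen_dvd per le_l.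
have [y noncopy [e1 e2 _]] := periodic_label per le_l dvd_p.
set E := p %/ blen t %/ radix t.
have eD : p %/ blen t = E * radix t by rewrite divnK // (radix_dvd_of_cdigit noncopy e1).
have ep : p = E * blen t.+1 by rewrite /= mulnA -eD divnK.
rewrite [leqRHS]ep leq_mul2r; apply/orP; right.
move: e2; rewrite eD divnDMl ?radix_gt0 // => /collapse_shift; apply; rewrite ?(ltnW (radix_gt _)) //.
  by move: p_gt0; rewrite ep muln_gt0 => /andP[].
by rewrite -(dvdn_mul_blen _ t.+1) -ep.
Qed.

Lemma bword_period_bound T : exists A, forall x p l,
  A <= l -> 0 < p -> n %| p -> periodic bword x p l -> l * T <= p.
Proof.
exists ((n + 2) * blen (3 * T)) => x p l le_l p_gt0 dvd_p per.
have lt_l : l < (n + 2) * blen (3 * T + l).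
  by have := blen_gt (3 * T + l); nia.
have [t le_Tt /andP[le_tl lt_tl]] := exists_crossing (f := fun t => (n + 2) * blen t) (leq_addr l _) le_l lt_l.
have le_T : (n + 2) * T <= radix t.+1 - n by rewrite /radix; nia.
have := period_lower_bound per le_tl p_gt0 dvd_p.
apply: leq_trans; apply: (@leq_trans ((n + 2) * T * blen t.+1)); last by rewrite leq_mul2r le_T orbT.
by rewrite mulnAC leq_mul2r (ltnW lt_tl) orbT.
Qed.

(** * Coding by 2n letters *)

Definition window q := mkseq (fun s => bword (q * n + s)) n.

Definition wbit q := bword (q * n).

Definition wrun q := find (predC1 (wbit q)) (window q).

(* The letter [b * n + (s - 1)] stands for the chunk b^s (~~ b)^(n - s). *)
Definition wletter q := wbit q * n + (wrun q).-1.

Definition letter_chunk l := chunk (n <= l) (l %% n).+1 n.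

Lemma size_window q : size (window q) = n.
Proof. exact: size_mkseq. Qed.

Lemma head_window q : head false (window q) = wbit q.
Proof. by rewrite -nth0 nth_mkseq // addn0. Qed.

Lemma windowE q : window q = chunk (wbit q) (wrun q) n.
Proof.
have := @chunk_find (window q); rewrite size_window head_window; apply=> i j /andP[lt_ij lt_j].
rewrite !nth_mkseq; try lia.
rewrite addnS => /bword_run run.
by rewrite -(run (j - i.+1)); [congr bword | ]; lia.
Qed.

Lemma wrun_gt0 q : 0 < wrun q.
Proof.
rewrite /wrun -head_window; case: (window q) (size_window q) => [|a c] /=; first lia.
by rewrite eqxx.
Qed.

Lemma wrun_le q : wrun q <= n.
Proof. by rewrite -(size_window q) find_size. Qed.

Lemma wletter_lt q : wletter q < 2 * n.
Proof. by rewrite /wletter; have := wrun_gt0 q; have := wrun_le q; case: (wbit q) => /=; lia. Qed.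

Lemma letter_chunk_wletter q : letter_chunk (wletter q) = window q.
Proof.
have := wrun_gt0 q; have := wrun_le q => le_r r_gt0; rewrite /letter_chunk.
have -> : (n <= wletter q) = wbit q by rewrite /wletter; case: (wbit q) => /=; lia.
have -> : (wletter q %% n).+1 = wrun q.
  by rewrite /wletter modnMDl modn_small; lia.
by rewrite windowE.
Qed.

Lemma letter_chunk_inj l l' : l < 2 * n -> l' < 2 * n -> letter_chunk l = letter_chunk l' -> l = l'.
Proof.
move=> lt_l lt_l' /chunk_inj []; rewrite ?ltn_pmod //.
move=> eb /eqP; rewrite eqSS => /eqP em.
rewrite (divn_eq l n) (divn_eq l' n) em; congr (_ * _ + _).
have div_b k : k < 2 * n -> k %/ n = (n <= k).
  move=> lt_k; case: leqP => [le_nk | lt_kn]; last by rewrite divn_small.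
  by apply/eqP; rewrite eqn_leq divn_gt0 // le_nk andbT -ltnS ltn_divLR.
by rewrite !div_b // eb.
Qed.

Lemma periodic_bword_of_wletter i q l :
  periodic wletter i q l -> periodic bword (i * n) (q * n) (l * n).
Proof.
move=> per j lt_j; have lt_s : j %% n < n by rewrite ltn_pmod.
have lt_k : j %/ n < l by rewrite ltn_divLR.
have bword_chunk k : bword (k * n + j %% n) = nth false (letter_chunk (wletter k)) (j %% n).
  by rewrite letter_chunk_wletter nth_mkseq.
have -> : i * n + j = (i + j %/ n) * n + j %% n by rewrite {1}(divn_eq j n) mulnDl addnA.
have -> : i * n + q * n + j = (i + q + j %/ n) * n + j %% n.
  by rewrite {1}(divn_eq j n) !mulnDl !addnA.
by rewrite !bword_chunk per.
Qed.

End Construction.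

Section Witness.
Variable n : nat.
Hypothesis n_gt0 : (0 < n)%N.
Local Open Scope ring_scope.
Local Open Scope ereal_scope.

Definition word : iword 'I_(2 * n) := fun q => Ordinal (wletter_lt n_gt0 q).

Lemma ACE_word : ACE word = 1.
Proof.
apply: ACE_eq1 => T; have [A long] := bword_period_bound n_gt0 T.
exists (A * T.+1)%N => i q m le_m /andP[q_gt0 lt_qm] per.
have perb : periodic (bword n) (i * n) (q * n) ((m - q) * n).
  by apply: (periodic_bword_of_wletter n_gt0) => j /per /(congr1 val).
have [le_A | lt_A] := leqP A ((m - q) * n); last nia.
have qn_gt0 : (0 < q * n)%N by rewrite muln_gt0 q_gt0.
by have := long _ _ _ le_A qn_gt0 (dvdn_mull _ (dvdnn n)) perb; nia.
Qed.

Section Coding.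
Variables (G : finType) (g0 g1 : G).
Hypothesis g01 : g0 != g1.

Definition bit_code (b : bool) := if b then g1 else g0.

Lemma bit_code_inj : injective bit_code.
Proof. by move=> [] [] //= e; move: g01; rewrite e eqxx. Qed.

Definition chunk_code (l : 'I_(2 * n)) : seq G := map bit_code (letter_chunk n l).

Lemma size_chunk_code l : size (chunk_code l) = n.
Proof. by rewrite size_map size_chunk // ltn_pmod. Qed.

Lemma chunk_code_inj : inj_morph chunk_code.
Proof.
apply: (uniform_inj_morph n_gt0 size_chunk_code) => l l' /(inj_map bit_code_inj) e.
exact/val_inj/(letter_chunk_inj n_gt0 (ltn_ord l) (ltn_ord l') e).
Qed.

Lemma chunk_code_image : morph_image chunk_code word (bit_code \o bword n).
Proof.
apply: (morph_image_uniform n_gt0 size_chunk_code) => q s lt_s.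
have chunkE : letter_chunk n (word q) = window n q := letter_chunk_wletter n_gt0 q.
by rewrite /chunk_code (nth_map false) chunkE ?nth_mkseq ?size_window.
Qed.

Lemma ACE_bword_image : n%:R%:E <= ACE (bit_code \o bword n).
Proof.
apply: ACE_ge_power => // N; exists 0%N, (blen n N); split; first exact/ltnW/blen_gt.
by move=> j lt_j /=; rewrite (bword_prefix_power n_gt0 lt_j).
Qed.
End Coding.

Lemma ACE_I_word (G : finType) : (2 <= #|G|)%N -> n%:R%:E <= @ACE_I _ G word.
Proof.
case/card_gt1P => g0 [g1 [_ _ g01]].
apply: le_trans (ACE_bword_image g0 g1) (ereal_sup_ubound _).
by exists (bit_code g0 g1 \o bword n) => //; exists (chunk_code g0 g1); split; [exact: chunk_code_inj | exact: chunk_code_image].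
Qed.
End Witness.

Local Open Scope ring_scope.

Theorem theorem24 :
  forall n : nat, (1 <= n)%N ->
  exists w : iword 'I_(2 * n),
    ACE w = (1 : R)%:E /\
    (forall Gamma : finType, (2 <= #|Gamma|)%N ->
       ((n%:R : R)%:E <= @ACE_I 'I_(2 * n) Gamma w)%E).
Proof.
move=> n n_gt0; exists (word n_gt0); split; first exact: ACE_word.
by move=> Gamma; apply: ACE_I_word.
Qed.
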